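(* Let $q$ be a prime power, $d$ a positive integer, and $m,n\ge 1$. Let $\Phi = (\phi_1, \ldots, \phi_n) : \mathbb{F}_q^m \to \mathbb{F}_q^n$ be a polynomial map with $\phi_i \in \mathbb{F}_q[x_1, \ldots, x_m]$ and $\deg \phi_i \le d$ for all $1 \le i \le n$. Suppose there is $\mu \in \mathbb{F}_q[x_1, \ldots, x_m]$ with $\sum_{a \in \Phi^{-1}(0)} \mu(a) \neq 0$. Then there exists a polynomial $P \in \mathbb{F}_q[x_1, \ldots, x_n]$ of total degree at most $(q-1)(n - m/d) + (\deg \mu)/d$ such that $P(0) \neq 0$ and $\operatorname{supp}(P) \subset \operatorname{im}(\Phi)$.
   Context: For $P \in \mathbb{F}_q[x_1,\ldots,x_n]$, $\operatorname{supp}(P) = \{x \in \mathbb{F}_q^n : P(x) \neq 0\}$. $\deg$ denotes total degree, and $\operatorname{im}(\Phi)$ is the image of $\Phi$. *)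

From HB Require Import structures.
From mathcomp Require Import all_boot all_order all_algebra.
From mathcomp Require Import finalg.
From mathcomp Require Import mpoly.
Set Implicit Arguments. Unset Strict Implicit. Unset Printing Implicit Defensive.
Import Order.TTheory GRing.Theory Num.Theory.
Local Open Scope ring_scope.

(* Total degree of a multivariate polynomial: msize p = 1 + deg p (0 for p = 0). *)
Definition tdeg (R : ringType) (k : nat) (p : {mpoly R[k]}) : nat := (msize p).-1.

Definition polymap (F : ringType) (m n : nat) (Phi : 'I_n -> {mpoly F[m]})
  (a : 'I_m -> F) : 'I_n -> F := fun i => (Phi i).@[a].

From HB Require Import structures.
From mathcomp Require Import all_boot all_order all_algebra.
From mathcomp Require Import fingroup cyclic finalg finfield.
From mathcomp Require Import mpoly.
From mathcomp Require Import ring lra zify.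
Set Implicit Arguments. Unset Strict Implicit. Unset Printing Implicit Defensive.
Import Order.TTheory GRing.Theory Num.Theory.
Local Open Scope ring_scope.

(** For [q = #|F|], the indicator of [c = y] on [F] is [1 - (c - y) ^ (q - 1)].
    Hence the fiber sum [S(y) = \sum_(a | Phi a = y) mu(a)] is a polynomial
    function of [y], with [y]-coefficients [\sum_a mu(a) G_k(a)] for explicit
    polynomials [G_k] of degree at most [deg mu + d ((q - 1) n - |k|)].  A sum
    over [F^m] of a polynomial of degree less than [m (q - 1)] vanishes, so only
    the monomials [y^k] with [d |k| <= d (q - 1) n + deg mu - m (q - 1)]
    survive.  The resulting polynomial [P] agrees with [S] everywhere, so
    [P(0) = S(0) <> 0] and [P(y) <> 0] forces the fiber over [y] to be nonempty. *)

Section FinFieldPowerSums.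
Variable F : finFieldType.
Local Notation q := #|F|.

Lemma natr_card : q%:R = 0 :> F.
Proof.
have := @expg_cardG _ [set: F] (GRing.one F) (in_setT _).
by rewrite cardsT FinRing.zmodXgE.
Qed.

Lemma expf_card_pred (x : F) : x != 0 -> x ^+ q.-1 = 1.
Proof.
move=> x_neq0; apply: (mulIf x_neq0).
by rewrite mul1r -exprSr prednK ?expf_card // ltnW // card_finNzRing_gt1.
Qed.

(* Otherwise [X^k - 1] would have all [q - 1] nonzero elements as roots. *)
Lemma exists_expf_neq1 k : (0 < k < q.-1)%N -> exists2 c : F, c != 0 & c ^+ k != 1.
Proof.
case/andP=> k_gt0 k_lt; apply/exists_inP.
apply: contraLR k_lt => /exists_inPn all_roots; rewrite -leqNgt.
pose units := [seq x <- enum F | x != 0].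
have: (size units < size ('X^k - 1 : {poly F})%R)%N.
  apply: max_poly_roots; first by rewrite -size_poly_eq0 size_XnsubC.
    apply/allP=> x; rewrite mem_filter => /andP[x_neq0 _].
    by rewrite rootE !hornerE; move/negPn: (all_roots x x_neq0) => /eqP->; rewrite subrr.
  by rewrite filter_uniq ?enum_uniq.
rewrite size_XnsubC // size_filter -(cardC1 (0 : F)) cardE /enum_mem size_filter.
by rewrite count_filter (@eq_count _ _ (predC1 0)) // => x; rewrite !inE andbT.
Qed.

Lemma sum_expr_eq0 k : (k < q.-1)%N -> \sum_(t : F) t ^+ k = 0.
Proof.
case: k => [_ | k k_lt].
  by rewrite (eq_bigr (fun=> 1)) ?sumr_const ?natr_card // => t _; rewrite expr0.
have [c c_neq0 ck_neq1] := @exists_expf_neq1 k.+1 k_lt.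
have scale_sum : \sum_(t : F) t ^+ k.+1 = c ^+ k.+1 * \sum_(t : F) t ^+ k.+1.
  rewrite mulr_sumr (reindex_inj (mulfI c_neq0)) /=.
  by apply: eq_bigr => t _; rewrite exprMn.
apply/eqP; move/eqP: scale_sum.
rewrite -subr_eq0 -{1}[\sum_t _]mul1r -mulrBl mulf_eq0 subr_eq0 eq_sym.
by rewrite (negbTE ck_neq1).
Qed.

(* Every monomial of [r] has an exponent below [q - 1] in some variable. *)
Lemma sum_meval_eq0 m (r : {mpoly F[m]}) :
  (msize r <= m * q.-1)%N -> \sum_(a : {ffun 'I_m -> F}) r.@[a] = 0.
Proof.
move=> r_small; under eq_bigr => a _ do rewrite mevalE.
rewrite exchange_big /=; apply: big1_seq => al /andP[_ al_supp].
rewrite -mulr_sumr.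
have -> : \sum_(a : {ffun 'I_m -> F}) \prod_i a i ^+ al i = \prod_i \sum_(t : F) t ^+ al i.
  by rewrite bigA_distr_bigA.
have [i al_i_lt | al_ge] := pickP (fun i => (al i < q.-1)%N).
  by rewrite (bigD1 i) //= sum_expr_eq0 // mul0r mulr0.
have := leq_trans (msize_mdeg_lt al_supp) r_small; rewrite ltnNge => /negP[].
rewrite mdegE -[m in (m * _)%N]card_ord -sum_nat_const.
by apply: leq_sum => i _; move/negbT: (al_ge i); rewrite -leqNgt.
Qed.

End FinFieldPowerSums.

Section TotalDegree.
Context {R : idomainType} {k : nat}.
Implicit Types p q : {mpoly R[k]}.

Lemma tdeg0 : tdeg (0 : {mpoly R[k]}) = 0%N.
Proof. by rewrite /tdeg msize0. Qed.

Lemma tdegC c : tdeg (c%:MP : {mpoly R[k]}) = 0%N.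
Proof. by rewrite /tdeg msizeC; case: (c != 0). Qed.

Lemma msize_tdeg p : (msize p <= (tdeg p).+1)%N.
Proof. by rewrite /tdeg; case: (msize p). Qed.

Lemma tdegN p : tdeg (- p) = tdeg p.
Proof. by rewrite /tdeg msizeN. Qed.

Lemma tdegD p q : (tdeg (p + q) <= maxn (tdeg p) (tdeg q))%N.
Proof. by rewrite /tdeg; have := msizeD_le p q; lia. Qed.

Lemma tdegZ c p : (tdeg (c *: p) <= tdeg p)%N.
Proof. by rewrite /tdeg; have := msizeZ_le p c; lia. Qed.

Lemma tdegM p q : (tdeg (p * q) <= tdeg p + tdeg q)%N.
Proof.
have [->|p_neq0] := eqVneq p 0; first by rewrite mul0r tdeg0.
have [->|q_neq0] := eqVneq q 0; first by rewrite mulr0 tdeg0.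
rewrite /tdeg msizeM //.
move: (msize_poly_eq0 p) (msize_poly_eq0 q); rewrite (negbTE p_neq0) (negbTE q_neq0).
by case: (msize p) (msize q) => [|a] [|b] //=; lia.
Qed.

Lemma tdegX p j : (tdeg (p ^+ j) <= j * tdeg p)%N.
Proof.
elim: j => [|j IHj]; first by rewrite expr0 -[1]/(1%:MP) tdegC.
by rewrite exprS mulSn; apply: leq_trans (tdegM _ _) _; rewrite leq_add2l.
Qed.

Lemma tdeg_prod (I : finType) (f : I -> {mpoly R[k]}) :
  (tdeg (\prod_i f i) <= \sum_i tdeg (f i))%N.
Proof.
elim/big_rec2: _ => [|i s p _ IHp]; first by rewrite -[1]/(1%:MP) tdegC.
by apply: leq_trans (tdegM _ _) _; rewrite leq_add2l.
Qed.

Lemma tdeg_sum_witness (I : finType) (P : pred I) (f : I -> {mpoly R[k]}) :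
  \sum_(i | P i) f i != 0 -> exists2 i, P i & (tdeg (\sum_(i | P i) f i) <= tdeg (f i))%N.
Proof.
move=> sum_neq0; have := msize_sum (index_enum I) f P.
rewrite -msize_poly_eq0 -lt0n in sum_neq0.
have [i0 Pi0 | P0] := pickP P; last first.
  by rewrite big_pred0 // => /(leq_trans sum_neq0).
rewrite (bigop.bigmax_eq_arg i0) //; case: arg_maxnP => //= i Pi _ le_msize.
by exists i => //; rewrite /tdeg; lia.
Qed.

End TotalDegree.

Section FiberSum.
Variable F : finFieldType.
Local Notation N := #|F|.-1.

(* The coefficient of [y ^+ k] in [1 - (c - y) ^+ N]. *)
Definition eq_coef (c : F) (k : nat) : F :=
  (k == 0%N)%:R - 'C(N, k)%:R * (-1) ^+ k * c ^+ (N - k).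

Lemma sum_eq_coef (c y : F) : \sum_(k < N.+1) eq_coef c k * y ^+ k = (c == y)%:R.
Proof.
have one_sub_pow : 1 - (c - y) ^+ N = (c == y)%:R.
  have N_gt0 : (0 < N)%N by rewrite -subn1 subn_gt0 card_finNzRing_gt1.
  have [->|c_neq_y] := eqVneq c y; first by rewrite subrr expr0n gtn_eqF // subr0.
  by rewrite expf_card_pred ?subrr // subr_eq0.
rewrite -one_sub_pow exprDn; under eq_bigr => k _ do rewrite /eq_coef mulrBl.
rewrite sumrB big_ord_recl /= mul1r big1 ?addr0 => [|k _]; last by rewrite mul0r.
congr (_ - _); apply: eq_bigr => k _; rewrite [in RHS]exprNn -mulr_natl; ring.
Qed.

Variables (m n : nat) (Phi : 'I_n -> {mpoly F[m]}) (mu : {mpoly F[m]}).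

Definition fiber_coefp (i : 'I_n) (k : nat) : {mpoly F[m]} :=
  ((k == 0%N)%:R)%:MP - ('C(N, k)%:R * (-1) ^+ k) *: Phi i ^+ (N - k).

Lemma meval_fiber_coefp i k (a : 'I_m -> F) :
  (fiber_coefp i k).@[a] = eq_coef (Phi i).@[a] k.
Proof. by rewrite mevalB mevalC mevalZ rmorphXn. Qed.

Definition fiber_coef (ka : {ffun 'I_n -> 'I_N.+1}) : F :=
  \sum_(a : {ffun 'I_m -> F}) (mu * \prod_i fiber_coefp i (ka i)).@[a].

Definition fiber_sum (y : 'I_n -> F) : F :=
  \sum_(a : {ffun 'I_m -> F} | [forall i, polymap Phi a i == y i]) mu.@[a].

Lemma fiber_sum_expand (y : 'I_n -> F) :
  fiber_sum y = \sum_(ka : {ffun 'I_n -> 'I_N.+1}) fiber_coef ka * \prod_i y i ^+ ka i.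
Proof.
have indicator (a : {ffun 'I_m -> F}) :
    (if [forall i, polymap Phi a i == y i] then mu.@[a] else 0)
    = mu.@[a] * \prod_i \sum_(k < N.+1) (fiber_coefp i k).@[a] * y i ^+ k.
  under eq_bigr => i _ do under eq_bigr => k _ do rewrite meval_fiber_coefp.
  under eq_bigr => i _ do rewrite sum_eq_coef.
  case: ifP => [/forallP fiber_a | /negbT/forallPn[i /negbTE Phi_a_neq]].
    rewrite big1 ?mulr1 // => i _.
    by rewrite -[(Phi i).@[a]]/(polymap Phi a i) (eqP (fiber_a i)) eqxx.
  by rewrite (bigD1 i) //= -[(Phi i).@[a]]/(polymap Phi a i) Phi_a_neq mul0r mulr0.
rewrite /fiber_sum big_mkcond /=.
under eq_bigr => a _ do rewrite indicator bigA_distr_bigA mulr_sumr.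
rewrite exchange_big /=; apply: eq_bigr => ka _.
rewrite /fiber_coef mulr_suml; apply: eq_bigr => a _.
by rewrite mevalM rmorph_prod big_split /= mulrA.
Qed.

Definition weight (ka : {ffun 'I_n -> 'I_N.+1}) : nat := \sum_i (ka i : nat).

Lemma sum_subn_weight (ka : {ffun 'I_n -> 'I_N.+1}) :
  (\sum_i (N - ka i) + weight ka = N * n)%N.
Proof.
rewrite -big_split /= (eq_bigr (fun=> N)) => [|i _]; last by rewrite subnK // -ltnS.
by rewrite sum_nat_const card_ord mulnC.
Qed.

Section Degree.
Variable d : nat.
Hypothesis tdeg_Phi : forall i, (tdeg (Phi i) <= d)%N.

Lemma tdeg_fiber_coefp i k : (tdeg (fiber_coefp i k) <= d * (N - k))%N.
Proof.
apply: leq_trans (tdegD _ _) _; rewrite tdegN tdegC max0n.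
apply: leq_trans (tdegZ _ _) _; apply: leq_trans (tdegX _ _) _.
by rewrite mulnC leq_mul2r tdeg_Phi orbT.
Qed.

Lemma fiber_coef_eq0 (ka : {ffun 'I_n -> 'I_N.+1}) :
  (d * N * n + tdeg mu < d * weight ka + m * N)%N -> fiber_coef ka = 0.
Proof.
move=> ka_high; apply: sum_meval_eq0; apply: leq_trans (msize_tdeg _) _.
have tdeg_term : (tdeg (mu * \prod_i fiber_coefp i (ka i))
                   <= tdeg mu + d * \sum_i (N - ka i))%N.
  apply: leq_trans (tdegM _ _) _; rewrite leq_add2l big_distrr.
  apply: leq_trans (tdeg_prod _) _.
  by apply: leq_sum => i _; apply: tdeg_fiber_coefp.
have split_weight : (d * \sum_i (N - ka i) + d * weight ka = d * (N * n))%N.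
  by rewrite -mulnDr sum_subn_weight.
move: ka_high tdeg_term split_weight; rewrite -mulnA.
set a := (d * \sum_i _)%N; set b := (d * weight ka)%N; set c := (d * (N * n))%N.
set e := (m * N)%N; set t := tdeg mu; set T := tdeg _.
by clearbody a b c e t T; lia.
Qed.

(* The monomials of the [y]-expansion of [fiber_sum] not killed by [fiber_coef_eq0]. *)
Definition low_weight (ka : {ffun 'I_n -> 'I_N.+1}) : bool :=
  (d * weight ka + m * N <= d * N * n + tdeg mu)%N.

Definition monomial_of (ka : {ffun 'I_n -> 'I_N.+1}) : 'X_{1..n} :=
  [multinom (ka i : nat) | i < n].

Definition fiber_poly : {mpoly F[n]} :=
  \sum_(ka | low_weight ka) fiber_coef ka *: 'X_[monomial_of ka].

Lemma meval_fiber_poly (y : 'I_n -> F) : fiber_poly.@[y] = fiber_sum y.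
Proof.
rewrite fiber_sum_expand (bigID low_weight) /= [X in _ + X]big1 ?addr0.
  rewrite /fiber_poly raddf_sum /=; apply: eq_bigr => ka _.
  by rewrite mevalZ mevalX; congr (_ * _); apply: eq_bigr => i _; rewrite mnmE.
by move=> ka; rewrite -ltnNge => /fiber_coef_eq0->; rewrite mul0r.
Qed.

Lemma tdeg_fiber_poly :
  fiber_poly != 0 -> (d * tdeg fiber_poly + m * N <= d * N * n + tdeg mu)%N.
Proof.
case/tdeg_sum_witness=> ka ka_low le_tdeg; apply: leq_trans _ ka_low.
rewrite leq_add2r leq_mul2l; apply/orP; right.
apply: leq_trans le_tdeg (leq_trans (tdegZ _ _) _).
by rewrite /tdeg msizeX mdegE /= (eq_bigr (fun i => (ka i : nat))) // => i _; rewrite mnmE.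
Qed.

End Degree.
End FiberSum.

Theorem lemma2p2 (F : finFieldType) (d m n : nat)
  (hd : (0 < d)%N) (hm : (1 <= m)%N) (hn : (1 <= n)%N)
  (Phi : 'I_n -> {mpoly F[m]})
  (hdeg : forall i : 'I_n, (tdeg (Phi i) <= d)%N)
  (mu : {mpoly F[m]})
  (hmu : \sum_(a : {ffun 'I_m -> F} | [forall i, polymap Phi a i == 0]) mu.@[a] != 0) :
  exists P : {mpoly F[n]},
    ((tdeg P)%:R <= (#|F|.-1)%:R * (n%:R - m%:R / d%:R) + (tdeg mu)%:R / d%:R :> rat)
    /\ P.@[fun _ : 'I_n => 0] != 0
    /\ (forall y : {ffun 'I_n -> F}, P.@[y] != 0 ->
          exists a : {ffun 'I_m -> F}, forall i : 'I_n, polymap Phi a i = y i).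
Proof.
have meval_P := meval_fiber_poly mu hdeg.
set P := fiber_poly Phi mu d in meval_P *.
have P0_neq0 : P.@[fun _ => 0] != 0 by rewrite meval_P.
have P_neq0 : P != 0 by apply: contraNneq P0_neq0 => ->; rewrite meval0.
exists P; split; last split=> // y.
  have d_gt0 : (0 : rat) < d%:R by rewrite ltr0n.
  have := tdeg_fiber_poly P_neq0; rewrite -/P -(ler_nat rat) !natrD !natrM => P_low.
  rewrite -(ler_pM2r d_gt0).
  have -> : ((#|F|.-1)%:R * (n%:R - m%:R / d%:R) + (tdeg mu)%:R / d%:R) * d%:R
            = (#|F|.-1)%:R * n%:R * d%:R - (#|F|.-1)%:R * m%:R + (tdeg mu)%:R :> rat.
    by field; rewrite pnatr_eq0 -lt0n.
  lra.
rewrite meval_P /fiber_sum.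
have [a fiber_a _ | no_fiber] :=
  pickP [pred a : {ffun 'I_m -> F} | [forall i, polymap Phi a i == y i]].
  by exists a => i; apply/eqP; move/forallP: fiber_a.
by rewrite big_pred0 ?eqxx.
Qed.
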